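(* There is no algorithm which, given a propositional Hilbert-type calculus $\mathbf{C}$ and a finite-valued logic $\mathbf{M}$ over the same language, decides whether $\mathbf{C}$ is weakly sound for $\mathbf{M}$, i.e., whether $\mathrm{Thm}(\mathbf{C})\subseteq\mathrm{Taut}(\mathbf{M})$.
   Context: A propositional language has variables $X_1,X_2,\ldots$ and finitely many connectives with arities (0-ary ones are constants). A substitution maps variables to formulas; $F\sigma$ is the result of simultaneously replacing each variable $X$ in $F$ by $\sigma(X)$. A propositional Hilbert-type calculus $\mathbf{C}$ is given by a finite set of axioms (formulas) and a finite set of rules, each consisting of premises $A_1,\ldots,A_n$ and a conclusion $C$ (formulas). A derivation is a finite sequence $F_1,\ldots,F_s$ in which each $F_i$ is either $A\sigma$ for an axiom $A$ and substitution $\sigma$, or $C\sigma$ for a rule with premises $A_1,\ldots,A_n$ and conclusion $C$ and a substitution $\sigma$ such that each $A_j\sigma$ occurs earlier in the sequence. $\mathrm{Thm}(\mathbf{C})$ is the set of formulas having a derivation. A finite-valued logic $\mathbf{M}$ is given by a finite set $V(\mathbf{M})$ of truth values, designated values $V^+(\mathbf{M})\subseteq V(\mathbf{M})$, and a truth function for each connective; valuations map variables to truth values and extend to formulas; a tautology is a formula designated under every valuation, and $\mathrm{Taut}(\mathbf{M})$ is the set of tautologies. *)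

From Stdlib Require Import Arith List Lia.
Import ListNotations.

(* A language is the list of arities of its finitely many connectives;
   connective number k has arity [nth k L 0]. *)
Definition language := list nat.

(* Variables X_1, X_2, ... are represented by Var 0, Var 1, ... *)
Inductive form : Type :=
| Var (x : nat)
| App (k : nat) (args : list form).

Fixpoint wf_form (L : language) (F : form) : Prop :=
  match F with
  | Var _ => True
  | App k args =>
      k < length L /\ length args = nth k L 0 /\
      (fix all (l : list form) : Prop :=
         match l with nil => True | a :: l' => wf_form L a /\ all l' end) args
  end.

Fixpoint subst (s : nat -> form) (F : form) : form :=
  match F with
  | Var x => s x
  | App k args =>
      App k ((fix mp (l : list form) : list form :=
                match l with nil => nil | a :: l' => subst s a :: mp l' end) args)
  end.

Definition subst_ok (L : language) (s : nat -> form) : Prop :=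
  forall x, wf_form L (s x).

Record calculus := Calculus {
  axioms : list form;
  rules  : list (list form * form)
}.

Definition wf_calculus (L : language) (C : calculus) : Prop :=
  (forall A, In A (axioms C) -> wf_form L A) /\
  (forall prem concl, In (prem, concl) (rules C) ->
     wf_form L concl /\ forall A, In A prem -> wf_form L A).

Definition is_derivation (L : language) (C : calculus) (s : list form) : Prop :=
  forall i, i < length s ->
    (exists A sg, In A (axioms C) /\ subst_ok L sg /\
                  nth i s (Var 0) = subst sg A) \/
    (exists prem concl sg, In (prem, concl) (rules C) /\ subst_ok L sg /\
                  nth i s (Var 0) = subst sg concl /\
                  forall A, In A prem -> In (subst sg A) (firstn i s)).

Definition Thm (L : language) (C : calculus) (F : form) : Prop :=
  exists s, is_derivation L C (s ++ [F]).

(* Truth values are 0, ..., nvals-1; designated values are listed in [desig];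
   the truth function of connective k is given by the table [nth k tables []],
   listing its values on argument tuples (a_1,...,a_m) in the order of the
   base-nvals number a_1 a_2 ... a_m. *)
Record fvlogic := FVLogic {
  nvals  : nat;
  desig  : list nat;
  tables : list (list nat)
}.

Definition wf_fvlogic (L : language) (M : fvlogic) : Prop :=
  0 < nvals M /\
  (forall d, In d (desig M) -> d < nvals M) /\
  length (tables M) = length L /\
  (forall k, k < length L ->
     length (nth k (tables M) []) = Nat.pow (nvals M) (nth k L 0) /\
     forall y, In y (nth k (tables M) []) -> y < nvals M).

Definition tuple_index (n : nat) (vs : list nat) : nat :=
  fold_left (fun acc x => acc * n + x) vs 0.

Fixpoint eval (M : fvlogic) (v : nat -> nat) (F : form) : nat :=
  match F with
  | Var x => v x
  | App k args =>
      nth (tuple_index (nvals M)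
             ((fix mp (l : list form) : list nat :=
                 match l with nil => nil | a :: l' => eval M v a :: mp l' end) args))
          (nth k (tables M) []) 0
  end.

Definition Taut (M : fvlogic) (F : form) : Prop :=
  forall v : nat -> nat, (forall x, v x < nvals M) -> In (eval M v F) (desig M).

Definition weakly_sound (L : language) (C : calculus) (M : fvlogic) : Prop :=
  forall F, Thm L C F -> Taut M F.

Definition cpair (a b : nat) : nat := (a + b) * (a + b + 1) / 2 + b.

Fixpoint code_list (l : list nat) : nat :=
  match l with nil => 0 | x :: l' => S (cpair x (code_list l')) end.

Fixpoint code_form (F : form) : nat :=
  match F with
  | Var x => cpair 0 x
  | App k args =>
      cpair (S k) (code_list
        ((fix mp (l : list form) : list nat :=
            match l with nil => nil | a :: l' => code_form a :: mp l' end) args))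
  end.

Definition code_rule (r : list form * form) : nat :=
  cpair (code_list (map code_form (fst r))) (code_form (snd r)).

Definition code_calculus (C : calculus) : nat :=
  cpair (code_list (map code_form (axioms C))) (code_list (map code_rule (rules C))).

Definition code_fvlogic (M : fvlogic) : nat :=
  cpair (nvals M) (cpair (code_list (desig M)) (code_list (map code_list (tables M)))).

Definition code_instance (L : language) (C : calculus) (M : fvlogic) : nat :=
  cpair (code_list L) (cpair (code_calculus C) (code_fvlogic M)).

Inductive instr :=
| INC (r : nat)
| DEC (r : nat) (j : nat).

Definition program := list instr.

Definition mstate := (nat * (nat -> nat))%type.

Definition upd (g : nat -> nat) (r v : nat) : nat -> nat :=
  fun x => if Nat.eqb x r then v else g x.

Definition step (P : program) (st : mstate) : mstate :=
  let (pc, g) := st in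
  match nth_error P pc with
  | None => st
  | Some (INC r) => (S pc, upd g r (S (g r)))
  | Some (DEC r j) =>
      match g r with
      | 0 => (j, g)
      | S m => (S pc, upd g r m)
      end
  end.

Fixpoint run (P : program) (k : nat) (st : mstate) : mstate :=
  match k with 0 => st | S k' => run P k' (step P st) end.

Definition halted (P : program) (st : mstate) : Prop := length P <= fst st.

Definition computes (P : program) (n m : nat) : Prop :=
  exists k, let st := run P k (0, fun r => if Nat.eqb r 0 then n else 0) in
            halted P st /\ snd st 0 = m.

(* Diagonalization. Suppose the register machine [P] decides weak soundness. The calculus
   [C0 P] simulates [P] on the code of the instance (L0, C0 P, M0) itself: it derives a formula
   [f_state pc regs] for every configuration of that run, and [f_bot] from a halting
   configuration with output 1. Conversely every theorem is true under the intended reading of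
   the connectives; in particular it is a compound formula, and [f_bot] is a theorem only if
   that run outputs 1. In the two-valued logic [M0] every compound formula not headed by
   [f_bot] is a tautology and [f_bot] is not, so [C0 P] is weakly sound for [M0] iff [P] does
   not output 1 on this instance, contradicting the assumption.

   The self-reference is obtained as in a quine: the axiom [data] stores numerals for the codes
   of [L0], of the other axioms, of the rules and of [M0], none of which involves the code of
   [data] itself, and rules computing sums, triangular numbers, Cantor pairs and codes of
   numerals assemble from them the code of [data] and then that of the whole instance. *)

From Stdlib Require Import Arith List Lia.
Import ListNotations.

Section Derivations.
Variables (L : language) (C : calculus).

Definition immediate_consequence (s : list form) (F : form) : Prop :=
  (exists A sg, In A (axioms C) /\ subst_ok L sg /\ F = subst sg A) \/
  (exists prem concl sg, In (prem, concl) (rules C) /\ subst_ok L sg /\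
     F = subst sg concl /\ forall A, In A prem -> In (subst sg A) s).

Lemma is_derivationE s : is_derivation L C s <->
  forall i, i < length s -> immediate_consequence (firstn i s) (nth i s (Var 0)).
Proof. reflexivity. Qed.

Lemma immediate_consequence_incl s s' F :
  incl s s' -> immediate_consequence s F -> immediate_consequence s' F.
Proof.
  intros Hss' [Hax | (prem & concl & sg & HR & Hsg & -> & Hprem)]; [now left |].
  right; exists prem, concl, sg; repeat split; auto.
Qed.

Lemma is_derivation_snoc s F :
  is_derivation L C (s ++ [F]) <-> is_derivation L C s /\ immediate_consequence s F.
Proof.
  rewrite !is_derivationE, length_app; cbn [length].
  assert (Hinit : forall i, i < length s ->
    firstn i (s ++ [F]) = firstn i s /\ nth i (s ++ [F]) (Var 0) = nth i s (Var 0)).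
  { intros i Hi; rewrite firstn_app, app_nth1 by lia.
    replace (i - length s) with 0 by lia; cbn [firstn]; now rewrite app_nil_r. }
  assert (Hlast : firstn (length s) (s ++ [F]) = s /\ nth (length s) (s ++ [F]) (Var 0) = F).
  { rewrite firstn_app, firstn_all, Nat.sub_diag, nth_middle; cbn [firstn].
    now rewrite app_nil_r. }
  split.
  - intros H; split.
    + intros i Hi; destruct (Hinit i Hi) as [<- <-]; apply H; lia.
    + specialize (H (length s) ltac:(lia)).
      now rewrite (proj1 Hlast), (proj2 Hlast) in H.
  - intros [Hs HF] i Hi.
    destruct (Nat.lt_ge_cases i (length s)) as [Hlt | Hge].
    + destruct (Hinit i Hlt) as [-> ->]; auto.
    + replace i with (length s) by lia; now rewrite (proj1 Hlast), (proj2 Hlast).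
Qed.

Lemma is_derivation_app s1 s2 :
  is_derivation L C s1 -> is_derivation L C s2 -> is_derivation L C (s1 ++ s2).
Proof.
  intros Hs1; induction s2 as [| F s2 IH] using rev_ind; [now rewrite app_nil_r |].
  rewrite app_assoc, !is_derivation_snoc; intros [Hs2 HF]; split; [auto |].
  apply (immediate_consequence_incl s2); [apply incl_appr, incl_refl | exact HF].
Qed.

Lemma derivation_of_Thms l : (forall F, In F l -> Thm L C F) ->
  exists s, is_derivation L C s /\ incl l s.
Proof.
  induction l as [| F l IH]; intros Hl.
  - exists []; split; [intros i Hi; cbn in Hi; lia | apply incl_nil_l].
  - destruct (Hl F (or_introl eq_refl)) as [s1 Hs1].
    destruct IH as (s2 & Hs2 & Hincl); [intros G HG; apply Hl; now right |].
    exists ((s1 ++ [F]) ++ s2); split; [now apply is_derivation_app |].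
    apply incl_cons; [| now apply incl_appr].
    apply in_or_app; left; apply in_or_app; right; now left.
Qed.

Lemma Thm_immediate s F :
  (forall G, In G s -> Thm L C G) -> immediate_consequence s F -> Thm L C F.
Proof.
  intros Hs HF; destruct (derivation_of_Thms s Hs) as (s' & Hs' & Hincl).
  exists s'; apply is_derivation_snoc; split; [exact Hs' |].
  exact (immediate_consequence_incl s s' F Hincl HF).
Qed.

Lemma Thm_axiom A sg F :
  In A (axioms C) -> subst_ok L sg -> subst sg A = F -> Thm L C F.
Proof.
  intros HA Hsg <-; apply (Thm_immediate []); [intros G [] |].
  left; now exists A, sg.
Qed.

Lemma Thm_rule prem concl sg F :
  In (prem, concl) (rules C) -> subst_ok L sg ->
  Forall (fun A => Thm L C (subst sg A)) prem -> subst sg concl = F -> Thm L C F.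
Proof.
  intros HR Hsg Hprem <-; apply (Thm_immediate (map (subst sg) prem)).
  - intros G (A & <- & HA)%in_map_iff; exact (proj1 (Forall_forall _ _) Hprem A HA).
  - right; exists prem, concl, sg; repeat split; auto using in_map.
Qed.

Lemma Thm_ind (G : form -> Prop) :
  (forall A sg, In A (axioms C) -> G (subst sg A)) ->
  (forall prem concl sg, In (prem, concl) (rules C) ->
     Forall (fun A => G (subst sg A)) prem -> G (subst sg concl)) ->
  forall F, Thm L C F -> G F.
Proof.
  intros Hax Hrule.
  assert (Hder : forall s, is_derivation L C s -> forall F, In F s -> G F).
  { induction s as [| F s IH] using rev_ind; [intros _ F [] |].
    intros [Hs HF]%is_derivation_snoc F' [HF' | [<- | []]]%in_app_or; [now apply IH |].
    destruct HF as [(A & sg & HA & _ & ->) | (prem & concl & sg & HR & _ & -> & Hprem)].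
    - now apply Hax.
    - apply (Hrule prem concl sg HR), Forall_forall; intros A HA.
      exact (IH Hs _ (Hprem A HA)). }
  intros F [s Hs]; apply (Hder _ Hs), in_or_app; right; now left.
Qed.

End Derivations.

Definition init_state (n : nat) : mstate := (0, fun r => if r =? 0 then n else 0).

Lemma computesE P n m : computes P n m <->
  exists k, halted P (run P k (init_state n)) /\ snd (run P k (init_state n)) 0 = m.
Proof. reflexivity. Qed.

Lemma run_S P k st : run P (S k) st = step P (run P k st).
Proof. revert st; induction k as [| k IH]; intros st; [reflexivity |]; apply IH. Qed.

Lemma run_add P a b st : run P (a + b) st = run P b (run P a st).
Proof. revert st; induction a as [| a IH]; intros st; [reflexivity |]; apply IH. Qed.

Lemma run_halted P k st : halted P st -> run P k st = st.
Proof.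
  destruct st as [pc g]; intros Hh; induction k as [| k IH]; [reflexivity |].
  cbn [run step]; now rewrite (proj2 (nth_error_None P pc) Hh).
Qed.

Lemma computes_functional P n m1 m2 : computes P n m1 -> computes P n m2 -> m1 = m2.
Proof.
  intros (k1 & Hh1 & <-)%computesE (k2 & Hh2 & <-)%computesE.
  rewrite <- (run_halted P k2 _ Hh1), <- (run_halted P k1 _ Hh2), <- !run_add.
  now rewrite Nat.add_comm.
Qed.

Lemma triangle_succ n : n * (n + 1) / 2 + S n = S n * (S n + 1) / 2.
Proof.
  replace (S n * (S n + 1)) with (n * (n + 1) + S n * 2) by lia.
  now rewrite Nat.div_add by lia.
Qed.

Definition zero : form := App 0 [].
Definition succ (t : form) : form := App 1 [t].
Definition num (n : nat) : form := Nat.iter n succ zero.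
Definition regs_nil : form := App 2 [].
Definition regs_cons (x r : form) : form := App 3 [x; r].
Definition f_add (a b c : form) : form := App 4 [a; b; c].
Definition f_tri (n t : form) : form := App 5 [n; t].
Definition f_pair (a b c : form) : form := App 6 [a; b; c].
Definition f_code (x c : form) : form := App 7 [x; c].
Definition f_data (a b c d : form) : form := App 8 [a; b; c; d].
Definition f_state (pc r : form) : form := App 9 [pc; r].
Definition f_halt (pc : form) : form := App 10 [pc].
Definition f_bot : form := App 11 [].

Lemma f_data_inj a b c d a' b' c' d' :
  f_data a b c d = f_data a' b' c' d' -> a = a' /\ b = b' /\ c = c' /\ d = d'.
Proof. now injection 1. Qed.

Definition L0 : language := [0; 1; 0; 2; 3; 2; 3; 2; 4; 2; 1; 0].

Definition M0 : fvlogic := FVLogic 2 [0]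
  [repeat 0 1; repeat 0 2; repeat 0 1; repeat 0 4; repeat 0 8; repeat 0 4;
   repeat 0 8; repeat 0 4; repeat 0 16; repeat 0 4; repeat 0 2; [1]].

Definition regs (l : list form) : form := fold_right regs_cons regs_nil l.

Fixpoint numval (F : form) : nat :=
  match F with App 1 [t] => S (numval t) | _ => 0 end.

Fixpoint regs_nth (r : form) (i : nat) : form :=
  match r with
  | App 3 [x; r'] => match i with 0 => x | S i' => regs_nth r' i' end
  | _ => zero
  end.

Definition nums (l : list nat) : nat -> form := fun x => num (nth x l 0).

Lemma subst_iter_succ sg n t : subst sg (Nat.iter n succ t) = Nat.iter n succ (subst sg t).
Proof.
  induction n as [| n IH]; [reflexivity |].
  change (subst sg (succ (Nat.iter n succ t)) = succ (Nat.iter n succ (subst sg t))).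
  now rewrite <- IH.
Qed.

Lemma subst_num sg n : subst sg (num n) = num n.
Proof. apply subst_iter_succ. Qed.

Lemma numval_iter_succ n t : numval (Nat.iter n succ t) = n + numval t.
Proof. induction n as [| n IH]; cbn; auto. Qed.

Lemma numval_num n : numval (num n) = n.
Proof. unfold num; rewrite numval_iter_succ; cbn; lia. Qed.

Lemma iter_succ_num a b : Nat.iter a succ (num b) = num (a + b).
Proof. unfold num; now rewrite Nat.iter_add. Qed.

Lemma subst_regs sg l : subst sg (regs l) = regs (map (subst sg) l).
Proof.
  induction l as [| x l IH]; [reflexivity |].
  change (subst sg (regs_cons x (regs l)) = regs_cons (subst sg x) (regs (map (subst sg) l))).
  now rewrite <- IH.
Qed.

Lemma regs_nth_regs l i : regs_nth (regs l) i = nth i l zero.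
Proof. revert i; induction l as [| x l IH]; intros [| i]; cbn; auto. Qed.

Lemma code_form_App k args : code_form (App k args) = cpair (S k) (code_list (map code_form args)).
Proof. reflexivity. Qed.

Lemma wf_App L k args : k < length L -> length args = nth k L 0 ->
  Forall (wf_form L) args -> wf_form L (App k args).
Proof.
  intros Hk Hlen Hargs; cbn; repeat split; auto.
  clear Hk Hlen; induction Hargs; [exact I | split; assumption].
Qed.

Lemma wf_num n : wf_form L0 (num n).
Proof.
  induction n as [| n IH]; apply wf_App; cbn; auto; lia.
Qed.

Lemma wf_iter_succ n t : wf_form L0 t -> wf_form L0 (Nat.iter n succ t).
Proof. intros Ht; induction n as [| n IH]; [exact Ht |]; apply wf_App; cbn; auto; lia. Qed.

Lemma wf_regs l : Forall (wf_form L0) l -> wf_form L0 (regs l).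
Proof.
  induction 1 as [| x l Hx Hl IH]; apply wf_App; cbn; auto; lia.
Qed.

Lemma subst_ok_num g : subst_ok L0 (fun x => num (g x)).
Proof. intros x; apply wf_num. Qed.

Lemma wf_M0 : wf_fvlogic L0 M0.
Proof.
  split; [cbn; lia |]; split; [intros d [<- | []]; cbn; lia |]; split; [reflexivity |].
  intros k Hk; cbn in Hk.
  do 12 (destruct k as [| k]; [split; [reflexivity | cbn; intros y Hy; intuition lia] |]).
  lia.
Qed.

Lemma eval_M0 v k args : k <> 11 -> eval M0 v (App k args) = 0.
Proof.
  intros Hk; cbn [eval]; set (i := tuple_index _ _); clearbody i.
  do 11 (destruct k as [| k]; [apply nth_repeat |]).
  destruct k as [| k]; [lia |]; now destruct k, i.
Qed.

Lemma Taut_M0 k args : k <> 11 -> Taut M0 (App k args).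
Proof. intros Hk v _; rewrite eval_M0 by exact Hk; now left. Qed.

Lemma not_Taut_bot : ~ Taut M0 f_bot.
Proof. intros H; destruct (H (fun _ => 0)) as [E | []]; [cbn; lia | discriminate]. Qed.

Definition r_add : list form * form :=
  ([f_add (Var 0) (Var 1) (Var 2)], f_add (succ (Var 0)) (Var 1) (succ (Var 2))).

Definition r_tri : list form * form :=
  ([f_tri (Var 0) (Var 1); f_add (Var 1) (succ (Var 0)) (Var 2)], f_tri (succ (Var 0)) (Var 2)).

Definition r_pair : list form * form :=
  ([f_add (Var 0) (Var 1) (Var 2); f_tri (Var 2) (Var 3); f_add (Var 3) (Var 1) (Var 4)],
   f_pair (Var 0) (Var 1) (Var 4)).

(* [code_form (succ t) = cpair 2 (S (cpair (code_form t) 0))] *)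
Definition r_code : list form * form :=
  ([f_code (Var 0) (Var 1); f_pair (Var 1) zero (Var 2); f_pair (num 2) (succ (Var 2)) (Var 3)],
   f_code (succ (Var 0)) (Var 3)).

Definition r_bot : list form * form :=
  ([f_state (Var 0) (regs_cons (succ zero) (Var 1)); f_halt (Var 0)], f_bot).

(* With [Var 0] .. [Var 3] the numerals stored in [data], [Var 4] .. [Var 7] are their codes,
   [Var 12] is the code of [data] and [Var 16] that of the whole instance (see [code_data] and
   [instance_code_eq]). *)
Definition start_premises : list form :=
  [f_data (Var 0) (Var 1) (Var 2) (Var 3);
   f_code (Var 0) (Var 4); f_code (Var 1) (Var 5); f_code (Var 2) (Var 6); f_code (Var 3) (Var 7);
   f_pair (Var 7) zero (Var 8);
   f_pair (Var 6) (succ (Var 8)) (Var 9);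
   f_pair (Var 5) (succ (Var 9)) (Var 10);
   f_pair (Var 4) (succ (Var 10)) (Var 11);
   f_pair (num 9) (succ (Var 11)) (Var 12);
   f_pair (Var 12) (Var 1) (Var 13);
   f_pair (succ (Var 13)) (Var 2) (Var 14);
   f_pair (Var 14) (Var 3) (Var 15);
   f_pair (Var 0) (Var 15) (Var 16)].

Definition code_L0 : nat := code_list L0.
Definition code_M0 : nat := code_fvlogic M0.

Definition instr_reg (ins : instr) : nat := match ins with INC r | DEC r _ => r end.

Section Diagonal.
Variable P : program.

(* State formulas record only the registers below [nregs]; [P] never touches the others. *)
Definition nregs : nat := S (fold_right (fun ins m => Nat.max (instr_reg ins) m) 0 P).

Lemma instr_reg_lt pc ins : nth_error P pc = Some ins -> instr_reg ins < nregs.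
Proof.
  intros Hins; apply nth_error_In in Hins; unfold nregs.
  induction P as [| ins' P' IH]; [destruct Hins |].
  destruct Hins as [<- | Hins]; cbn; [lia |]; specialize (IH Hins); lia.
Qed.

Definition regs_pat (f : nat -> form) : form := regs (map f (seq 0 nregs)).
Definition regs_vars : form := regs_pat Var.
Definition regs_succ (r : nat) : form := regs_pat (fun j => if j =? r then succ (Var j) else Var j).
Definition regs_zero (r : nat) : form := regs_pat (fun j => if j =? r then zero else Var j).

Lemma subst_regs_pat sg f : subst sg (regs_pat f) = regs_pat (fun j => subst sg (f j)).
Proof. unfold regs_pat; now rewrite subst_regs, map_map. Qed.

Lemma regs_nth_regs_pat f j : j < nregs -> regs_nth (regs_pat f) j = f j.
Proof.
  intros Hj; unfold regs_pat; rewrite regs_nth_regs, nth_indep with (d' := f 0)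
    by now rewrite length_map, length_seq.
  now rewrite map_nth, seq_nth.
Qed.

Lemma regs_nth_subst_regs_pat sg f j :
  j < nregs -> regs_nth (subst sg (regs_pat f)) j = subst sg (f j).
Proof. intros Hj; now rewrite subst_regs_pat, regs_nth_regs_pat. Qed.

Lemma regs_pat_ext f f' : (forall j, j < nregs -> f j = f' j) -> regs_pat f = regs_pat f'.
Proof.
  intros Hff'; unfold regs_pat; f_equal; apply map_ext_in.
  intros j Hj%in_seq; apply Hff'; lia.
Qed.

Lemma wf_regs_pat f : (forall j, wf_form L0 (f j)) -> wf_form L0 (regs_pat f).
Proof. intros Hf; apply wf_regs, Forall_map, Forall_forall; auto. Qed.

Definition instr_rules (pc : nat) : list (list form * form) :=
  match nth_error P pc with
  | Some (INC r) => [([f_state (num pc) regs_vars], f_state (num (S pc)) (regs_succ r))]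
  | Some (DEC r j) => [([f_state (num pc) (regs_zero r)], f_state (num j) (regs_zero r));
                       ([f_state (num pc) (regs_succ r)], f_state (num (S pc)) regs_vars)]
  | None => []
  end.

Definition r_start : list form * form :=
  (start_premises, f_state zero (regs_pat (fun j => if j =? 0 then Var 16 else zero))).

Definition all_rules : list (list form * form) :=
  r_add :: r_tri :: r_pair :: r_code :: r_start :: r_bot :: flat_map instr_rules (seq 0 (length P)).

Definition other_axioms : list form :=
  [f_add zero (Var 0) (Var 0); f_tri zero zero; f_code zero (num (cpair 1 0));
   f_halt (Nat.iter (length P) succ (Var 0))].

Definition code_axioms : nat := code_list (map code_form other_axioms).
Definition code_rules : nat := code_list (map code_rule all_rules).

Definition data : form := f_data (num code_L0) (num code_axioms) (num code_rules) (num code_M0).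

Definition C0 : calculus := Calculus (data :: other_axioms) all_rules.

Definition instance_code : nat := code_instance L0 C0 M0.

Lemma code_instance_C0 : code_instance L0 C0 M0 = instance_code.
Proof. exact eq_refl. Qed.

Lemma data_eq : data = f_data (num code_L0) (num code_axioms) (num code_rules) (num code_M0).
Proof. reflexivity. Qed.

Lemma code_data : code_form data =
  cpair 9 (S (cpair (code_form (num code_L0)) (S (cpair (code_form (num code_axioms))
    (S (cpair (code_form (num code_rules)) (S (cpair (code_form (num code_M0)) 0)))))))).
Proof. unfold data, f_data; rewrite code_form_App; apply f_equal; exact eq_refl. Qed.

Lemma instance_code_eq : instance_code =
  cpair code_L0 (cpair (cpair (S (cpair (code_form data) code_axioms)) code_rules) code_M0).
Proof.
  unfold instance_code, code_instance, code_calculus.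
  apply f_equal2; [exact eq_refl |]; apply f_equal2; [| exact eq_refl].
  apply f_equal2; exact eq_refl.
Qed.

(* These codes are astronomically large unary numerals that no proof may evaluate; this is also
   why [code_data] and [instance_code_eq] are proved congruence by congruence. *)
Opaque code_L0 code_M0 code_axioms code_rules data instance_code.

Definition wf_rule (rl : list form * form) : Prop :=
  wf_form L0 (snd rl) /\ Forall (wf_form L0) (fst rl).

Ltac wf_L0 := repeat match goal with
  | |- _ /\ _ => split
  | |- wf_rule _ => split; cbn [fst snd]
  | |- Forall _ [] => constructor
  | |- Forall _ (_ :: _) => constructor
  | |- wf_form _ (Var _) => exact I
  | |- wf_form _ (num _) => apply wf_num
  | |- wf_form _ (Nat.iter _ succ _) => apply wf_iter_succ
  | |- wf_form _ (regs_pat _) => apply wf_regs_pat; intro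
  | |- wf_form _ (if ?b then _ else _) => destruct b
  | |- wf_form _ _ => apply wf_App; [cbn; lia | reflexivity |]
  end.

Lemma wf_instr_rules pc : Forall wf_rule (instr_rules pc).
Proof.
  unfold instr_rules, regs_vars, regs_succ, regs_zero.
  destruct (nth_error P pc) as [[r | r j] |]; wf_L0.
Qed.

Lemma wf_C0 : wf_calculus L0 C0.
Proof.
  split.
  - intros A [<- | HA]; [rewrite data_eq; wf_L0 |].
    cbn in HA; repeat destruct HA as [<- | HA]; [wf_L0 .. | destruct HA].
  - assert (Hrules : Forall wf_rule all_rules).
    { unfold all_rules, r_add, r_tri, r_pair, r_code, r_start, r_bot, start_premises.
      wf_L0.
      apply Forall_flat_map, Forall_forall; intros pc _; apply wf_instr_rules. }
    intros prem concl HR; apply (proj1 (Forall_forall _ _) Hrules) in HR as [Hconcl Hprem].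
    split; [exact Hconcl | now apply Forall_forall].
Qed.

(** * Soundness: every theorem is true in the intended reading *)

Definition reachable (st : mstate) : Prop :=
  exists k, fst (run P k (init_state instance_code)) = fst st /\
    forall j, j < nregs -> snd (run P k (init_state instance_code)) j = snd st j.

Lemma reachable_ext st st' : fst st = fst st' ->
  (forall j, j < nregs -> snd st j = snd st' j) -> reachable st -> reachable st'.
Proof.
  intros Hpc Hregs (k & Hk & Hg); exists k; split; [congruence |].
  intros j Hj; rewrite Hg, Hregs by exact Hj; reflexivity.
Qed.

Lemma reachable_step st : reachable st -> reachable (step P st).
Proof.
  intros (k & Hpc & Hg); exists (S k); rewrite run_S.
  destruct (run P k _) as [pc g0], st as [pc' g]; cbn [fst snd] in Hpc, Hg |- *; subst pc'.
  unfold step; destruct (nth_error P pc) as [ins |] eqn:Hins; [| split; auto].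
  pose proof (instr_reg_lt pc ins Hins) as Hr.
  destruct ins as [r | r j]; cbn [instr_reg] in Hr; rewrite (Hg r Hr).
  - split; [reflexivity |]; intros i Hi; cbn [snd]; unfold upd; destruct (i =? r); auto.
  - destruct (g r); split; cbn [fst snd]; auto; intros i Hi; unfold upd; destruct (i =? r); auto.
Qed.

Definition intended (F : form) : Prop :=
  match F with
  | App 4 [a; b; c] => numval a + numval b = numval c
  | App 5 [n; t] => numval t = numval n * (numval n + 1) / 2
  | App 6 [a; b; c] => numval c = cpair (numval a) (numval b)
  | App 7 [x; c] => numval c = code_form x
  | App 8 [a; b; c; d] => App 8 [a; b; c; d] = data
  | App 9 [pc; r] => reachable (numval pc, fun j => numval (regs_nth r j))
  | App 10 [pc] => length P <= numval pc
  | App 11 _ => computes P instance_code 1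
  | _ => False
  end.

Definition sound_rule (rl : list form * form) : Prop :=
  forall sg, Forall (fun A => intended (subst sg A)) (fst rl) -> intended (subst sg (snd rl)).

Lemma sound_r_add : sound_rule r_add.
Proof.
  intros sg H; cbn [fst snd r_add] in *; apply Forall_cons_iff in H as [Hadd _].
  cbn [subst intended numval f_add succ] in *; lia.
Qed.

Lemma sound_r_tri : sound_rule r_tri.
Proof.
  intros sg H; cbn [fst snd r_tri] in *; rewrite !Forall_cons_iff in H.
  destruct H as (Htri & Hadd & _); cbn [subst intended numval f_add f_tri succ] in *.
  now rewrite <- Hadd, Htri, triangle_succ.
Qed.

Lemma sound_r_pair : sound_rule r_pair.
Proof.
  intros sg H; cbn [fst snd r_pair] in *; rewrite !Forall_cons_iff in H.
  destruct H as (Hsum & Htri & Hpair & _); cbn [subst intended numval f_add f_tri f_pair] in *.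
  unfold cpair; now rewrite <- Hpair, Htri, <- Hsum.
Qed.

Lemma sound_r_code : sound_rule r_code.
Proof.
  intros sg H; cbn [fst snd r_code] in *; rewrite !Forall_cons_iff in H.
  destruct H as (Hcode & Hpair1 & Hpair2 & _).
  cbn [subst intended numval f_code f_pair succ zero] in *; rewrite subst_num, numval_num in Hpair2.
  now rewrite Hpair2, Hpair1, Hcode, code_form_App.
Qed.

Lemma sound_r_bot : sound_rule r_bot.
Proof.
  intros sg H; cbn [fst snd r_bot] in *; rewrite !Forall_cons_iff in H.
  destruct H as ((k & Hpc & Hregs) & Hhalt & _); cbn [subst intended f_state f_halt] in *.
  apply computesE; exists k; split.
  - unfold halted; now rewrite Hpc.
  - rewrite Hregs by (unfold nregs; lia); reflexivity.
Qed.

Lemma sound_r_start : sound_rule r_start.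
Proof.
  intros sg H; cbn [fst snd r_start] in *; unfold start_premises in H.
  rewrite !Forall_cons_iff in H.
  destruct H as (Hdata & Hc4 & Hc5 & Hc6 & Hc7 & Hp8 & Hp9 & Hp10 & Hp11 & Hp12 & Hp13 & Hp14
                 & Hp15 & Hp16 & _).
  cbn [subst intended f_data f_code f_pair f_state succ zero numval] in *.
  rewrite data_eq in Hdata; apply f_data_inj in Hdata as (E0 & E1 & E2 & E3).
  rewrite subst_num, numval_num in Hp12; rewrite E0, E1, E2, E3, ?numval_num in *.
  exists 0; split; [reflexivity |]; intros j Hj; cbn [run init_state fst snd].
  rewrite regs_nth_subst_regs_pat by exact Hj; destruct j as [| j]; [cbn | reflexivity].
  rewrite instance_code_eq, code_data, Hp16, Hp15, Hp14, Hp13, Hp12, Hp11, Hp10, Hp9, Hp8,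
    Hc4, Hc5, Hc6, Hc7; exact eq_refl.
Qed.

Lemma sound_instr_rules pc rl : In rl (instr_rules pc) -> sound_rule rl.
Proof.
  unfold instr_rules; destruct (nth_error P pc) as [ins |] eqn:Hins; [| intros []].
  pose proof (instr_reg_lt pc ins Hins) as Hr.
  destruct ins as [r | r j]; cbn [instr_reg] in Hr;
    [intros [<- | []] | intros [<- | [<- | []]]]; intros sg H; cbn [fst snd] in *;
    apply Forall_cons_iff in H as [Hst _]; cbn [subst intended f_state] in *;
    rewrite !subst_num, !numval_num in *; apply reachable_step in Hst;
    unfold step in Hst; rewrite Hins in Hst; cbv beta in Hst.
  - revert Hst; apply reachable_ext; [reflexivity |]; intros i Hi; cbn [snd]; unfold upd.
    unfold regs_vars, regs_succ; rewrite !regs_nth_subst_regs_pat by assumption.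
    destruct (i =? r) eqn:E; [apply Nat.eqb_eq in E as -> | ]; reflexivity.
  - unfold regs_zero in Hst |- *; rewrite (regs_nth_subst_regs_pat _ _ r Hr), Nat.eqb_refl in Hst.
    exact Hst.
  - unfold regs_succ in Hst; rewrite (regs_nth_subst_regs_pat _ _ r Hr), Nat.eqb_refl in Hst.
    cbn [subst numval succ] in Hst.
    revert Hst; apply reachable_ext; [reflexivity |]; intros i Hi; cbn [snd]; unfold upd.
    unfold regs_vars; rewrite !regs_nth_subst_regs_pat by assumption.
    destruct (i =? r) eqn:E; [apply Nat.eqb_eq in E as -> | ]; reflexivity.
Qed.

Lemma intended_axioms A sg : In A (axioms C0) -> intended (subst sg A).
Proof.
  intros [<- | [<- | [<- | [<- | [<- | []]]]]].
  - assert (Hsubst : subst sg data = data)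
      by (rewrite data_eq; cbn [subst f_data]; now rewrite !subst_num).
    rewrite Hsubst, data_eq at 1; cbn [intended f_data]; symmetry; exact data_eq.
  - reflexivity.
  - reflexivity.
  - cbn [subst intended f_code]; now rewrite subst_num, numval_num.
  - cbn [subst intended f_halt]; rewrite subst_iter_succ, numval_iter_succ; lia.
Qed.

Lemma sound_all_rules : Forall sound_rule all_rules.
Proof.
  repeat constructor; auto using sound_r_add, sound_r_tri, sound_r_pair, sound_r_code,
    sound_r_start, sound_r_bot.
  apply Forall_flat_map, Forall_forall; intros pc _; apply Forall_forall, sound_instr_rules.
Qed.

Lemma Thm_intended F : Thm L0 C0 F -> intended F.
Proof.
  apply Thm_ind; [apply intended_axioms |].
  intros prem concl sg HR; exact (proj1 (Forall_forall _ _) sound_all_rules _ HR sg).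
Qed.

(** * Completeness: the calculus follows the run of [P] *)

Definition state_form (st : mstate) : form :=
  f_state (num (fst st)) (regs_pat (fun j => num (snd st j))).

Lemma subst_state_form sg pc f g : (forall j, j < nregs -> subst sg (f j) = num (g j)) ->
  subst sg (f_state (num pc) (regs_pat f)) = state_form (pc, g).
Proof.
  intros Hfg; unfold state_form; cbn [subst f_state fst snd].
  now rewrite subst_num, subst_regs_pat, (regs_pat_ext _ _ Hfg).
Qed.

Ltac split_Forall := repeat match goal with
  | |- Forall _ [] => constructor
  | |- Forall _ (_ :: _) => constructor
  end.

Lemma Thm_add_num a b : Thm L0 C0 (f_add (num a) (num b) (num (a + b))).
Proof.
  induction a as [| a IH].
  - apply (Thm_axiom L0 C0 (f_add zero (Var 0) (Var 0)) (nums [b]));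
      [right; now left | apply subst_ok_num | reflexivity].
  - eapply (Thm_rule L0 C0 _ _ (nums [a; b; a + b]));
      [now left | apply subst_ok_num | | reflexivity].
    split_Forall; exact IH.
Qed.

Lemma Thm_tri_num n : Thm L0 C0 (f_tri (num n) (num (n * (n + 1) / 2))).
Proof.
  induction n as [| n IH].
  - apply (Thm_axiom L0 C0 (f_tri zero zero) (nums []));
      [do 2 right; now left | apply subst_ok_num | reflexivity].
  - rewrite <- triangle_succ.
    eapply (Thm_rule L0 C0 _ _ (nums [n; n * (n + 1) / 2; n * (n + 1) / 2 + S n]));
      [right; now left | apply subst_ok_num | | reflexivity].
    split_Forall; [exact IH | exact (Thm_add_num _ (S n))].
Qed.

Lemma Thm_pair_num a b : Thm L0 C0 (f_pair (num a) (num b) (num (cpair a b))).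
Proof.
  set (s := a + b); set (t := s * (s + 1) / 2).
  eapply (Thm_rule L0 C0 _ _ (nums [a; b; s; t; t + b]));
    [do 2 right; now left | apply subst_ok_num | | reflexivity].
  split_Forall; [apply Thm_add_num | apply Thm_tri_num | apply Thm_add_num].
Qed.

Lemma Thm_code_num n : Thm L0 C0 (f_code (num n) (num (code_form (num n)))).
Proof.
  induction n as [| n IH].
  - apply (Thm_axiom L0 C0 (f_code zero (num (cpair 1 0))) (nums []));
      [do 3 right; now left | apply subst_ok_num | reflexivity].
  - set (c := code_form (num n)) in IH.
    eapply (Thm_rule L0 C0 _ _ (nums [n; c; cpair c 0; cpair 2 (S (cpair c 0))]));
      [do 3 right; now left | apply subst_ok_num | | reflexivity].
    split_Forall; [exact IH | exact (Thm_pair_num c 0) | exact (Thm_pair_num 2 (S (cpair c 0)))].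
Qed.

Lemma rule_in_all_rules pc rl : In rl (instr_rules pc) -> In rl all_rules.
Proof.
  intros Hrl; do 6 right; apply in_flat_map; exists pc; split; [| exact Hrl].
  apply in_seq; split; [lia |]; cbn.
  unfold instr_rules in Hrl; destruct (nth_error P pc) eqn:Hins; [| destruct Hrl].
  apply nth_error_Some; congruence.
Qed.

Lemma Thm_init_state : Thm L0 C0 (state_form (init_state instance_code)).
Proof.
  pose (ca := code_form (num code_L0)); pose (cb := code_form (num code_axioms));
  pose (cc := code_form (num code_rules)); pose (cm := code_form (num code_M0)).
  pose (t8 := cpair cm 0); pose (t9 := cpair cc (S t8)); pose (t10 := cpair cb (S t9));
  pose (t11 := cpair ca (S t10)); pose (t12 := cpair 9 (S t11));
  pose (t13 := cpair t12 code_axioms); pose (t14 := cpair (S t13) code_rules);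
  pose (t15 := cpair t14 code_M0).
  assert (Hcode : instance_code = cpair code_L0 t15)
    by (rewrite instance_code_eq, code_data; exact eq_refl).
  eapply (Thm_rule L0 C0 _ _ (nums [code_L0; code_axioms; code_rules; code_M0; ca; cb; cc; cm;
                               t8; t9; t10; t11; t12; t13; t14; t15; instance_code])).
  - do 4 right; left; exact eq_refl.
  - apply subst_ok_num.
  - unfold start_premises; split_Forall; cbn [subst nums nth].
    + apply (Thm_axiom L0 C0 data (nums [])); [left; exact eq_refl | apply subst_ok_num |].
      rewrite data_eq; cbn [subst f_data]; rewrite !subst_num; exact eq_refl.
    + apply Thm_code_num.
    + apply Thm_code_num.
    + apply Thm_code_num.
    + apply Thm_code_num.
    + exact (Thm_pair_num cm 0).
    + exact (Thm_pair_num cc (S t8)).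
    + exact (Thm_pair_num cb (S t9)).
    + exact (Thm_pair_num ca (S t10)).
    + exact (Thm_pair_num 9 (S t11)).
    + exact (Thm_pair_num t12 code_axioms).
    + exact (Thm_pair_num (S t13) code_rules).
    + exact (Thm_pair_num t14 code_M0).
    + rewrite Hcode; exact (Thm_pair_num code_L0 t15).
  - unfold init_state; apply (subst_state_form _ 0); intros [| j] _; exact eq_refl.
Qed.

Lemma Thm_state_step st : Thm L0 C0 (state_form st) -> Thm L0 C0 (state_form (step P st)).
Proof.
  destruct st as [pc g]; intros Hst; cbn [step].
  destruct (nth_error P pc) as [[r | r j] |] eqn:Hins;
    [| destruct (g r) as [| m] eqn:Hr | exact Hst].
  - eapply (Thm_rule L0 C0 _ _ (fun x => num (g x))).
    + apply (rule_in_all_rules pc); unfold instr_rules, regs_vars, regs_succ; rewrite Hins.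
      now left.
    + apply subst_ok_num.
    + split_Forall; rewrite (subst_state_form _ _ _ g); auto.
    + apply subst_state_form; intros i _; unfold upd.
      destruct (i =? r) eqn:E; [apply Nat.eqb_eq in E as -> |]; reflexivity.
  - eapply (Thm_rule L0 C0 _ _ (fun x => num (g x))).
    + apply (rule_in_all_rules pc); unfold instr_rules, regs_zero; rewrite Hins; now left.
    + apply subst_ok_num.
    + split_Forall; rewrite (subst_state_form _ _ _ g); auto.
      intros i _; destruct (i =? r) eqn:E; [apply Nat.eqb_eq in E as -> |]; now rewrite ?Hr.
    + apply subst_state_form; intros i _.
      destruct (i =? r) eqn:E; [apply Nat.eqb_eq in E as -> |]; now rewrite ?Hr.
  - eapply (Thm_rule L0 C0 _ _ (fun x => num (upd g r m x))).
    + apply (rule_in_all_rules pc); unfold instr_rules, regs_vars, regs_succ; rewrite Hins.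
      right; now left.
    + apply subst_ok_num.
    + split_Forall; rewrite (subst_state_form _ _ _ g); auto.
      intros i _; unfold upd; destruct (i =? r) eqn:E; cbn [subst succ]; rewrite E;
        [apply Nat.eqb_eq in E as ->; rewrite Hr |]; reflexivity.
    + apply subst_state_form; reflexivity.
Qed.

Lemma Thm_state_run k : Thm L0 C0 (state_form (run P k (init_state instance_code))).
Proof.
  induction k as [| k IH]; [exact Thm_init_state |].
  rewrite run_S; now apply Thm_state_step.
Qed.

Lemma Thm_bot : computes P instance_code 1 -> Thm L0 C0 f_bot.
Proof.
  intros (k & Hhalt & Hout)%computesE; pose proof (Thm_state_run k) as Hst.
  destruct (run P k _) as [pc g]; unfold halted in Hhalt; cbn [fst snd] in Hhalt, Hout.
  pose (tail := regs (map (fun j => num (g j)) (seq 1 (pred nregs)))).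
  eapply (Thm_rule L0 C0 _ _ (fun x => match x with 0 => num pc | _ => tail end)).
  - do 5 right; now left.
  - intros [| x]; [apply wf_num | apply wf_regs, Forall_map, Forall_forall; intros; apply wf_num].
  - split_Forall.
    + change (Thm L0 C0 (f_state (num pc) (regs_cons (num (g 0)) tail))) in Hst.
      now rewrite Hout in Hst.
    + apply (Thm_axiom L0 C0 (f_halt (Nat.iter (length P) succ (Var 0)))
               (fun _ => num (pc - length P))); [do 4 right; now left | apply subst_ok_num |].
      cbn [subst f_halt]; rewrite subst_iter_succ; cbn [subst].
      rewrite iter_succ_num; do 3 f_equal; lia.
  - reflexivity.
Qed.

Lemma weakly_sound_C0 : weakly_sound L0 C0 M0 <-> ~ computes P instance_code 1.
Proof.
  split.
  - intros Hsound Hcomp; exact (not_Taut_bot (Hsound _ (Thm_bot Hcomp))).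
  - intros Hcomp F HF; pose proof (Thm_intended F HF) as Hint.
    destruct F as [x | k args]; [destruct Hint |].
    apply Taut_M0; intros ->; exact (Hcomp Hint).
Qed.

End Diagonal.

Theorem proposition3 :
  ~ exists P : program,
      forall (L : language) (C : calculus) (M : fvlogic),
        wf_calculus L C -> wf_fvlogic L M ->
        exists b : bool,
          computes P (code_instance L C M) (if b then 1 else 0) /\
          (b = true <-> weakly_sound L C M).
Proof.
  intros [P HP].
  destruct (HP L0 (C0 P) M0 (wf_C0 P) wf_M0) as (b & Hcomp & Hdecides).
  rewrite code_instance_C0 in Hcomp; rewrite weakly_sound_C0 in Hdecides.
  destruct b.
  - exact (proj1 Hdecides eq_refl Hcomp).
  - assert (Hnot1 : ~ computes P (instance_code P) 1)
      by (intros H1; discriminate (computes_functional _ _ _ _ Hcomp H1)).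
    discriminate (proj2 Hdecides Hnot1).
Qed.
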